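(* For real numbers $Q_1,Q_2,\dots$ let $A_n$ be the adjacency matrix of the path on $n$ vertices $1,2,\dots,n$, let $H_n = A_n + \mathrm{diag}(Q_1,\dots,Q_n)$ and $p_n = p_n(x;Q_1,\dots,Q_n) = \det(xI_n - H_n)$ (with $p_0 = 1$, $p_{-1}=0$). Let $L_{2n}$ be the characteristic polynomial of $A_{2n} + \mathrm{diag}(Q_1,\dots,Q_n,Q_n,\dots,Q_1)$ and $L_{2n+1}$ that of $A_{2n+1} + \mathrm{diag}(Q_1,\dots,Q_n,Q_{n+1},Q_n,\dots,Q_1)$. Then (1) $p_n(x;Q_1,\dots,Q_n) = (x-Q_n)\,p_{n-1}(x;Q_1,\dots,Q_{n-1}) - p_{n-2}(x;Q_1,\dots,Q_{n-2})$; (2) $L_{2n} = (p_n + p_{n-1})(p_n - p_{n-1})$; (3) $L_{2n+1} = p_n\,(p_{n+1} - p_{n-1})$, where $p_{n+1} = p_{n+1}(x;Q_1,\dots,Q_{n+1})$. Moreover, in each of the factorizations (2) and (3), the roots of the first factor are eigenvalues of the corresponding symmetric-potential path Hamiltonian with eigenvectors $f$ satisfying $f(1) = -f(N) \neq 0$, and the roots of the second factor are eigenvalues with eigenvectors $f$ satisfying $f(1) = f(N)\neq 0$, where $N\in\{2n,2n+1\}$ is the last vertex of the path.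
   Context: Vertices of the path on $N$ vertices are labeled $1,\dots,N$ in order, so $1$ and $N$ are the endpoints. *)

From mathcomp Require Import all_boot all_order all_algebra.
Set Implicit Arguments. Unset Strict Implicit. Unset Printing Implicit Defensive.
Import Order.TTheory GRing.Theory Num.Theory.
Local Open Scope ring_scope.

Section PathDefs.
Variable R : realFieldType.

(* Adjacency matrix of the path on N vertices; vertex k (1-based) is the
   ordinal k-1. *)
Definition pathA (N : nat) : 'M[R]_N :=
  \matrix_(i, j) (if (i.+1 == j :> nat) || (j.+1 == i :> nat) then 1 else 0).

(* H = A_N + diag(V 1, ..., V N), V indexed from 1 (V 0 unused). *)
Definition pathH (N : nat) (V : nat -> R) : 'M[R]_N :=
  pathA N + diag_mx (\row_(i < N) V i.+1).

Definition p (n : nat) (Q : nat -> R) : {poly R} := char_poly (pathH n Q).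

Definition pprev (n : nat) (Q : nat -> R) : {poly R} :=
  if n is k.+1 then p k Q else 0.

(* Symmetric potential on the path with N vertices: vertex k gets
   Q_(min k (N+1-k)), i.e. Q_1,...,Q_n,Q_n,...,Q_1 for N = 2n and
   Q_1,...,Q_n,Q_(n+1),Q_n,...,Q_1 for N = 2n+1. *)
Definition symQ (N : nat) (Q : nat -> R) (k : nat) : R := Q (minn k (N.+1 - k)).

Definition symH (N : nat) (Q : nat -> R) : 'M[R]_N := pathH N (symQ N Q).

Definition L (N : nat) (Q : nat -> R) : {poly R} := char_poly (symH N Q).

Definition eigvec_end (N : nat) (M : 'M[R]_N) (x : R) (s : R) (f : 'cV[R]_N) :=
  M *m f = x *: f /\
  exists (i1 iN : 'I_N), val i1 = 0%N /\ val iN = N.-1 /\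
    f i1 0 != 0 /\ f i1 0 = s * f iN 0.

End PathDefs.

From mathcomp Require Import all_boot all_order all_algebra.
From mathcomp Require Import zify ring.
Set Implicit Arguments. Unset Strict Implicit. Unset Printing Implicit Defensive.
Import Order.TTheory GRing.Theory Num.Theory.
Local Open Scope ring_scope.

(* Expanding det(x - H_n) along its last row gives the recurrence (1), and
   everything else is derived from it.  Cutting the path after vertex m gives
   p_(m+k) = p_m p'_k - p_(m-1) p''_(k-1), with p' and p'' built on the shifted
   potentials, and reversing the potential leaves p unchanged; applied to the
   symmetric potential this yields the factorizations (2) and (3).
   For a root x of p_N, f(k) = p_(k-1)(x) is an eigenvector because it solves
   the eigenvalue recurrence with f(0) = f(N+1) = 0.  For a symmetric
   potential, k |-> s f(N+1-k) solves the same recurrence; the vanishing factor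
   says precisely that it agrees with f at two consecutive middle vertices, so
   the two solutions coincide and f(N) = s f(1). *)

Lemma eq_three_term_recurrence (T : pzRingType) (c u v : nat -> T) m n :
  (forall k, (m <= k)%N -> (k.+2 <= n)%N -> u k.+2 = c k.+1 * u k.+1 - u k) ->
  (forall k, (m <= k)%N -> (k.+2 <= n)%N -> v k.+2 = c k.+1 * v k.+1 - v k) ->
  u m = v m -> u m.+1 = v m.+1 -> forall k, (m <= k <= n)%N -> u k = v k.
Proof.
move=> recu recv um um1; elim/ltn_ind=> k IH /andP[mk kn].
case: (ltngtP k m.+1) => [km | mk1 | ->] //; first by have -> : k = m by lia.
case: k IH mk kn mk1 => [|[|k]] IH mk kn mk1 //.
rewrite recu ?recv ?(IH k) ?(IH k.+1) //; apply/andP; lia.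
Qed.

Section Tridiagonal.
Variables (T : comPzRingType) (t : nat -> nat -> T).
Hypothesis t_band : forall i j, (i.+2 <= j)%N || (j.+2 <= i)%N -> t i j = 0.

Local Notation M n := (\matrix_(i < n, j < n) t i j).

Lemma row'_col'_max_tridiag n :
  row' ord_max (col' ord_max (M n.+1)) = M n.
Proof. by apply/matrixP => i j; rewrite !mxE !lift_max. Qed.

Lemma det_tridiag n :
  \det (M n.+2) = t n.+1 n.+1 * \det (M n.+1) - t n.+1 n * t n n.+1 * \det (M n).
Proof.
have sign_double k : (-1) ^+ k.*2 = 1 :> T by rewrite -signr_odd odd_double.
rewrite (expand_det_row _ ord_max) !big_ord_recr /= big1 ?add0r => [|j _]; last first.
  by rewrite mxE t_band ?mul0r //=; have := ltn_ord j; lia.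
rewrite /cofactor row'_col'_max_tridiag !mxE /=.
set minor := row' _ _.
(* Deleting the last row and column n leaves t n n.+1 alone in the last column. *)
have -> : \det minor = t n n.+1 * \det (M n).
  rewrite (expand_det_col _ ord_max) big_ord_recr /= big1 ?add0r => [|i _]; last first.
    by rewrite !mxE lift_max /= /bump leqnn t_band ?mul0r //=; have := ltn_ord i; lia.
  rewrite /cofactor !mxE lift_max /= /bump leqnn addnn sign_double mul1r.
  congr (_ * \det _); apply/matrixP => i j; rewrite !mxE !lift_max /=.
  have bump_j : bump n j = j by rewrite /bump leqNgt ltn_ord.
  by rewrite !bump_j.
by rewrite addSn exprS !addnn !sign_double; ring.
Qed.

End Tridiagonal.

Section PathHamiltonian.
Variable R : realFieldType.
Implicit Types V W : nat -> R.

Let path_entry V (i j : nat) : {poly R} :=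
  if i == j then 'X - (V i.+1)%:P else if (i.+1 == j) || (j.+1 == i) then -1 else 0.

Lemma char_poly_mx_pathH N V :
  char_poly_mx (pathH N V) = \matrix_(i, j) path_entry V i j.
Proof.
apply/matrixP => i j; rewrite !mxE /path_entry -val_eqE /=.
case: eqP => [<-|ij]; first by rewrite mulr1n !(gtn_eqF (ltnSn _)) add0r.
by rewrite mulr0n addr0 sub0r; case: ifP; rewrite ?rmorph1 ?rmorph0 ?oppr0.
Qed.

Lemma p0 V : p 0 V = 1.
Proof. by rewrite /p /char_poly det_mx00. Qed.

Lemma pS n V : p n.+1 V = ('X - (V n.+1)%:P) * p n V - pprev n V.
Proof.
rewrite /p /char_poly char_poly_mx_pathH.
case: n => [|n]; first by rewrite det_mx11 det_mx00 mxE mulr1 subr0.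
rewrite det_tridiag => [|i j]; last first.
  by rewrite /path_entry => /orP[] ij; rewrite ifF ?ifF //; apply/negbTE; lia.
rewrite /= -!char_poly_mx_pathH /path_entry !eqxx (gtn_eqF (ltnSn n)) (ltn_eqF (ltnSn n)).
by rewrite orbT mulrNN !mul1r.
Qed.

Lemma eq_pprev n V W :
  (forall i, (0 < i < n)%N -> V i = W i) -> pprev n V = pprev n W.
Proof.
move=> eqVW.
apply: (@eq_three_term_recurrence _ (fun k => 'X - (V k)%:P)
  (fun k => pprev k V) (fun k => pprev k W) 0 n _ _ _ _ n) => //.
- by move=> k _ _; apply: pS.
- by move=> k _ kn; rewrite /= pS eqVW //; lia.
- by rewrite /= !p0.
- by rewrite leqnn.
Qed.

Lemma eq_p n V W : (forall i, (0 < i <= n)%N -> V i = W i) -> p n V = p n W.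
Proof. by move=> eqVW; apply: (eq_pprev (n := n.+1)). Qed.

Lemma p_addn m k V :
  p (m + k) V = p m V * p k (fun i => V (m + i)%N)
                - pprev m V * pprev k (fun i => V (m.+1 + i)%N).
Proof.
set W1 := fun i => _; set W2 := fun i => _.
apply: (@eq_three_term_recurrence _ (fun j => 'X - (V (m + j.+1)%N)%:P)
  (fun j => p (m + j) V) (fun j => p m V * p j W1 - pprev m V * pprev j W2) 0 k _ _ _ _ k) => //.
- by move=> j _ _; rewrite !addnS pS.
- by move=> j _ _; rewrite /= (pS j.+1 W1) (pS j W2) /W2 addSnnS /=; ring.
- by rewrite /= addn0 p0 mulr1 mulr0 subr0.
- by rewrite /= (pS 0 W1) !p0 /W1 /= addn1 pS; ring.
- by rewrite leqnn.
Qed.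

Lemma p_rev n V W :
  (forall i, (0 < i <= n)%N -> W i = V (n.+1 - i)%N) -> p n W = p n V.
Proof.
elim/ltn_ind: n V W => -[|[|n]] IH V W revW; rewrite ?p0 //.
  by rewrite !pS !p0 revW.
rewrite [LHS]pS (_ : p n.+2 V = p (1 + n.+1) V) // p_addn [p 1 V]pS /= p0.
rewrite (IH n.+1 _ (fun i => V (1 + i)%N)) // => [|i i_n]; last first.
  by rewrite revW; [congr V|]; lia.
rewrite (IH n _ (fun i => V (2 + i)%N)) // => [|i i_n]; last first.
  by rewrite revW; [congr V|]; lia.
rewrite revW ?subSnn ?leqnn //; ring.
Qed.

Lemma pathH_mul_col N V (h : nat -> R) : h 0%N = 0 -> h N.+1 = 0 ->
  pathH N V *m \col_(i < N) h i.+1 = \col_(i < N) (h i + h i.+2 + V i.+1 * h i.+1).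
Proof.
move=> h0 hN; apply/matrixP => i z; rewrite ord1 /pathH mulmxDl mul_diag_mx !mxE.
congr (_ + _); rewrite (eq_bigr (fun j : 'I_N => (if j == i.+1 :> nat then h j.+1 else 0)
                                         + (if j.+1 == i :> nat then h j.+1 else 0))); last first.
  move=> j _; rewrite !mxE (eq_sym i.+1).
  case: eqP => [ji|_]; case: eqP => [ij|_] /=; rewrite ?mul1r ?mul0r ?addr0 ?add0r //.
  lia.
rewrite big_split -!big_mkcond /= (big_ord1_eq _ (fun j => h j.+1)) [RHS]addrC.
congr (_ + _).
  case: (ltnP i.+1 N) => // iN; have -> : i.+2 = N.+1 by have := ltn_ord i; lia.
  by rewrite hN.
case: (nat_of_ord i) (ltn_ord i) => [|i'] iN; first by rewrite big_pred0.
rewrite (eq_bigl (fun j : 'I_N => j == i' :> nat)) // (big_ord1_eq _ (fun j => h j.+1)).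
by rewrite ltnW.
Qed.

Lemma pathH_eigvec N V x : root (p N V) x ->
  pathH N V *m \col_(i < N) (p i V).[x] = x *: \col_(i < N) (p i V).[x].
Proof.
move=> /rootP pNx; have /= -> := pathH_mul_col V (h := fun k => (pprev k V).[x]) (horner0 x) pNx.
by apply/matrixP => i z; rewrite !mxE pS hornerD hornerN hornerM hornerXsubC; ring.
Qed.

Lemma pprev_last_reflect N V x s m : s * s = 1 ->
    (forall k, (0 < k <= N)%N -> V (N.+1 - k)%N = V k) -> (m <= N)%N ->
    (pprev m V).[x] = s * (pprev (N.+1 - m) V).[x] ->
    (pprev m.+1 V).[x] = s * (pprev (N - m) V).[x] ->
  (pprev N V).[x] = s.
Proof.
move=> ss symV mN um um1; pose u k := (pprev k V).[x]; pose w k := s * u (N.+1 - k)%N.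
have u_rec k : u k.+2 = (x - V k.+1) * u k.+1 - u k.
  by rewrite /u /= pS hornerD hornerN hornerM hornerXsubC.
have w_rec k : (k.+2 <= N)%N -> w k.+2 = (x - V k.+1) * w k.+1 - w k.
  move=> kN; rewrite /w.
  have -> : (N.+1 - k = (N.+1 - k.+2).+2)%N by lia.
  have Ek1 : (N.+1 - k.+1 = (N.+1 - k.+2).+1)%N by lia.
  rewrite Ek1 u_rec -Ek1 symV; [ring | lia].
have : u N = w N.
  apply: (@eq_three_term_recurrence _ (fun k => x - V k) u w m N) => //.
  - by move=> k _; apply: w_rec.
  - by rewrite mN leqnn.
by rewrite /w subSnn /u /= p0 hornerC mulr1.
Qed.

Lemma sym_pathH_eigvec_end N V x s m : (0 < N)%N -> s * s = 1 ->
    (forall k, (0 < k <= N)%N -> V (N.+1 - k)%N = V k) -> (m <= N)%N ->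
    root (p N V) x ->
    (pprev m V).[x] = s * (pprev (N.+1 - m) V).[x] ->
    (pprev m.+1 V).[x] = s * (pprev (N - m) V).[x] ->
  exists f, eigvec_end (pathH N V) x s f.
Proof.
move=> N_gt0 ss symV mN pNx um um1.
exists (\col_(i < N) (p i V).[x]); split; first exact: pathH_eigvec.
have lastN : (N.-1 < N)%N by rewrite ltn_predL.
exists (Ordinal N_gt0), (Ordinal lastN); rewrite !mxE /= p0 hornerC.
do 2!split=> //; split; first exact: oner_neq0.
have pprevN : pprev N V = p N.-1 V by rewrite -[in LHS](prednK N_gt0).
by rewrite -pprevN (pprev_last_reflect ss symV mN um um1) ss.
Qed.

End PathHamiltonian.

Section SymmetricPotential.
Variables (R : realFieldType) (Q : nat -> R).

Lemma L_double n : L n.*2 Q = (p n Q + pprev n Q) * (p n Q - pprev n Q).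
Proof.
have -> : L n.*2 Q = p (n + n) (symQ n.*2 Q) by rewrite addnn.
rewrite p_addn (@eq_p _ n _ Q) => [|i i_n]; last by rewrite /symQ; congr Q; lia.
rewrite (@eq_pprev _ n _ Q) => [|i i_n]; last by rewrite /symQ; congr Q; lia.
rewrite (@p_rev _ n Q) => [|i i_n]; last by rewrite /symQ; congr Q; lia.
have -> : pprev n (fun i => symQ n.*2 Q (n.+1 + i)) = pprev n Q.
  by case: n => [//|n]; apply: p_rev => i i_n; rewrite /symQ; congr Q; lia.
ring.
Qed.

Lemma L_double_succ n : L n.*2.+1 Q = p n Q * (p n.+1 Q - pprev n Q).
Proof.
have -> : L n.*2.+1 Q = p (n + n.+1) (symQ n.*2.+1 Q) by rewrite addnS addnn.
rewrite p_addn (@eq_p _ n _ Q) => [|i i_n]; last by rewrite /symQ; congr Q; lia.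
rewrite (@eq_pprev _ n _ Q) => [|i i_n]; last by rewrite /symQ; congr Q; lia.
rewrite (@p_rev _ n.+1 Q) => [|i i_n]; last by rewrite /symQ; congr Q; lia.
rewrite /= (@p_rev _ n Q) => [|i i_n]; last by rewrite /symQ; congr Q; lia.
ring.
Qed.

Lemma symQ_reflect N k : (k <= N.+1)%N -> symQ N Q (N.+1 - k)%N = symQ N Q k.
Proof. by move=> kN; rewrite /symQ; congr Q; lia. Qed.

Lemma symH_double_eigvec n x s : s * s = 1 -> root (L n.*2 Q) x ->
  (p n Q).[x] = s * (pprev n Q).[x] -> exists f, eigvec_end (symH n.*2 Q) x s f.
Proof.
case: n => [|n] ss Lx pQx.
  by move: pQx; rewrite p0 hornerC horner0 mulr0 => /eqP; rewrite oner_eq0.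
have eqS k : (k <= n.+2)%N -> pprev k (symQ n.+1.*2 Q) = pprev k Q.
  by move=> kn; apply: eq_pprev => i i_k; rewrite /symQ; congr Q; lia.
apply: (@sym_pathH_eigvec_end _ _ _ _ _ n.+1) => //; try lia.
- by move=> k /andP[_ kN]; apply: symQ_reflect; lia.
- have -> : (n.+1.*2.+1 - n.+1 = n.+2)%N by lia.
  by rewrite !eqS //= pQx mulrA ss mul1r.
- have -> : (n.+1.*2 - n.+1 = n.+1)%N by lia.
  by rewrite !eqS.
Qed.

Lemma symH_double_succ_eigvec n x s : s * s = 1 -> root (L n.*2.+1 Q) x ->
    (p n Q).[x] = s * (p n Q).[x] -> (pprev n Q).[x] = s * (p n.+1 Q).[x] ->
  exists f, eigvec_end (symH n.*2.+1 Q) x s f.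
Proof.
move=> ss Lx pQx pprevQx.
have eqS k : (k <= n.+2)%N -> pprev k (symQ n.*2.+1 Q) = pprev k Q.
  by move=> kn; apply: eq_pprev => i i_k; rewrite /symQ; congr Q; lia.
apply: (@sym_pathH_eigvec_end _ _ _ _ _ n) => //; try lia.
- by move=> k /andP[_ kN]; apply: symQ_reflect; lia.
- have -> : (n.*2.+2 - n = n.+2)%N by lia.
  by rewrite !eqS //; lia.
- have -> : (n.*2.+1 - n = n.+1)%N by lia.
  by rewrite !eqS //; lia.
Qed.

End SymmetricPotential.

Theorem lemma2 (R : realFieldType) (Q : nat -> R) :
  (* (1) three-term recurrence, with p_0 = 1 and p_{-1} = 0 *)
  (p 0 Q = 1 /\
   (forall n : nat, (0 < n)%N ->
      p n Q = ('X - (Q n)%:P) * pprev n Q - pprev (n.-1) Q)) /\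
  (* (2) even case *)
  (forall n : nat,
     L n.*2 Q = (p n Q + pprev n Q) * (p n Q - pprev n Q) /\
     (forall x : R, root (p n Q + pprev n Q) x ->
        exists f : 'cV[R]_(n.*2), eigvec_end (symH n.*2 Q) x (-1) f) /\
     (forall x : R, root (p n Q - pprev n Q) x ->
        exists f : 'cV[R]_(n.*2), eigvec_end (symH n.*2 Q) x 1 f)) /\
  (* (3) odd case *)
  (forall n : nat,
     L n.*2.+1 Q = p n Q * (p n.+1 Q - pprev n Q) /\
     (forall x : R, root (p n Q) x ->
        exists f : 'cV[R]_(n.*2.+1), eigvec_end (symH n.*2.+1 Q) x (-1) f) /\
     (forall x : R, root (p n.+1 Q - pprev n Q) x ->
        exists f : 'cV[R]_(n.*2.+1), eigvec_end (symH n.*2.+1 Q) x 1 f)).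
Proof.
have sqrN1 : (-1) * (-1) = 1 :> R by rewrite mulrNN mulr1.
split; first by split=> [|[//|n] _]; [exact: p0 | exact: pS].
split=> n.
  split; first exact: L_double.
  split=> x rx.
  - apply: symH_double_eigvec sqrN1 _ _; first by rewrite L_double rootM rx.
    by move/rootP: rx; rewrite hornerD mulN1r => /eqP; rewrite addr_eq0 => /eqP.
  - apply: symH_double_eigvec (mulr1 1) _ _; first by rewrite L_double rootM rx orbT.
    by move/rootP: rx; rewrite hornerD hornerN mul1r => /eqP; rewrite subr_eq0 => /eqP.
split; first exact: L_double_succ.
split=> x rx.
- have /rootP px := rx.
  apply: symH_double_succ_eigvec sqrN1 _ _ _; first by rewrite L_double_succ rootM rx.
  + by rewrite px mulr0.
  + by rewrite pS hornerD hornerN hornerM px mulr0 sub0r mulN1r opprK.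
- apply: symH_double_succ_eigvec (mulr1 1) _ _ _.
  + by rewrite L_double_succ rootM rx orbT.
  + by rewrite mul1r.
  + by move/rootP: rx; rewrite hornerD hornerN mul1r => /eqP; rewrite subr_eq0 => /eqP.
Qed.
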